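(* Let $\mathcal{G}$ be a finite-dimensional solvable Lie algebra with basis $\{X_i\}$ and structure constants $[X_i,X_j]=C_{ij}^k X_k$, and let $S=\{\lambda_\alpha\}$ be a finite abelian semigroup with 2-selector $K_{\alpha\beta}^{\gamma}$. Then the $S$-expanded algebra $\mathcal{G}_S=S\otimes\mathcal{G}$ is solvable.
   Context: For a finite abelian semigroup $S=\{\lambda_\alpha\}$, the 2-selector is defined by $K_{\alpha\beta}^{\gamma}=1$ if $\lambda_\alpha\lambda_\beta=\lambda_\gamma$ and $0$ otherwise. The $S$-expanded algebra $\mathcal{G}_S=S\otimes\mathcal{G}$ is the vector space with basis $X_{(i,\alpha)}=\lambda_\alpha\otimes X_i$ and Lie bracket $[X_{(i,\alpha)},X_{(j,\beta)}]=K_{\alpha\beta}^{\gamma}C_{ij}^k X_{(k,\gamma)}$ (this is a Lie algebra). A Lie algebra $\mathcal{L}$ is solvable if the derived series $\mathcal{L}^{(0)}=\mathcal{L}$, $\mathcal{L}^{(n)}=[\mathcal{L}^{(n-1)},\mathcal{L}^{(n-1)}]$ reaches $0$. *)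

From HB Require Import structures.
From mathcomp Require Import all_boot all_order all_algebra.
Set Implicit Arguments. Unset Strict Implicit. Unset Printing Implicit Defensive.
Import GRing.Theory.
Local Open Scope ring_scope.

(* A finite-dimensional Lie algebra over a field F is presented by a finite
   basis indexed by I and structure constants C i j k : [X_i, X_j] = sum_k C i j k X_k. *)

Definition is_lie_constants (F : fieldType) (I : finType) (C : I -> I -> I -> F) : Prop :=
  (forall i k, C i i k = 0) /\
  (forall i j k, C i j k = - C j i k) /\
  (forall i j k m,
     \sum_(l : I) (C i j l * C l k m + C j k l * C l i m + C k i l * C l j m) = 0).

Definition sc_bracket (F : fieldType) (I : finType) (C : I -> I -> I -> F)
  (x y : I -> F) : I -> F :=
  fun k => \sum_(i : I) \sum_(j : I) x i * y j * C i j k.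

Inductive in_span (F : fieldType) (I : finType) (P : (I -> F) -> Prop) : (I -> F) -> Prop :=
  | span_zero : in_span P (fun _ => 0)
  | span_gen v : P v -> in_span P v
  | span_add v w : in_span P v -> in_span P w -> in_span P (fun i => v i + w i)
  | span_scale (a : F) v : in_span P v -> in_span P (fun i => a * v i).

Fixpoint derived (F : fieldType) (I : finType) (C : I -> I -> I -> F) (n : nat)
  : (I -> F) -> Prop :=
  match n with
  | 0 => fun _ => True
  | n'.+1 => in_span (fun v => exists x y, derived C n' x /\ derived C n' y
                                  /\ v = sc_bracket C x y)
  end.

Definition solvable_sc (F : fieldType) (I : finType) (C : I -> I -> I -> F) : Prop :=
  exists n : nat, forall v, derived C n v -> forall i, v i = 0.

Definition abelian_semigroup (S : Type) (mul : S -> S -> S) : Prop :=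
  associative mul /\ commutative mul.

Definition selector (F : fieldType) (S : finType) (mul : S -> S -> S) (a b c : S) : F :=
  if mul a b == c then 1 else 0.

(* structure constants of the S-expanded algebra, basis X_(i,a) = lambda_a (x) X_i *)
Definition expanded_constants (F : fieldType) (I S : finType) (mul : S -> S -> S)
  (C : I -> I -> I -> F) (p q r : I * S) : F :=
  selector F mul p.2 q.2 r.2 * C p.1 q.1 r.1.

From mathcomp Require Import all_boot all_order all_algebra.
From Stdlib Require Import FunctionalExtensionality.
Set Implicit Arguments. Unset Strict Implicit. Unset Printing Implicit Defensive.
Import GRing.Theory.
Local Open Scope ring_scope.

(* The bracket of S ⊗ G only mixes the S-components through the selector, so
   the λ_c-component of [x, y] is a linear combination of brackets in G of the
   components of x and y.  By induction, every component of an element of the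
   n-th derived algebra of S ⊗ G lies in the n-th derived algebra of G, which
   vanishes once G is solvable. *)

Lemma in_span_eqfun (F : fieldType) (I : finType) (P : (I -> F) -> Prop) (v w : I -> F) :
  v =1 w -> in_span P v -> in_span P w.
Proof. by move=> /functional_extensionality ->. Qed.

Lemma in_span_sum (F : fieldType) (I : finType) (A : Type) (P : (I -> F) -> Prop)
    (f : A -> I -> F) (r : seq A) :
  (forall a, in_span P (f a)) -> in_span P (fun k => \sum_(a <- r) f a k).
Proof.
move=> span_f; elim: r => [|a r IHr].
  by apply: in_span_eqfun (@span_zero _ _ P) => k; rewrite big_nil.
by apply: in_span_eqfun (span_add (span_f a) IHr) => k; rewrite big_cons.
Qed.

Section ExpandedAlgebra.

Variables (F : fieldType) (I S : finType) (mul : S -> S -> S) (C : I -> I -> I -> F).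

Definition slice (v : I * S -> F) (a : S) : I -> F := fun i => v (i, a).

Lemma sum_pair (G : I * S -> F) : \sum_(p : I * S) G p = \sum_(i : I) \sum_(a : S) G (i, a).
Proof. by rewrite pair_big; apply: eq_bigr => -[i a]. Qed.

Lemma slice_expanded_bracket (x y : I * S -> F) (c : S) :
  slice (sc_bracket (expanded_constants mul C) x y) c =
  (fun k => \sum_(a : S) \sum_(b : S)
     selector F mul a b c * sc_bracket C (slice x a) (slice y b) k).
Proof.
apply: functional_extensionality => k.
rewrite /sc_bracket /expanded_constants /slice sum_pair exchange_big /=.
apply: eq_bigr => a _; under eq_bigr do rewrite sum_pair exchange_big.
rewrite exchange_big; apply: eq_bigr => b _.
rewrite mulr_sumr; apply: eq_bigr => i _; rewrite mulr_sumr; apply: eq_bigr => j _.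
by rewrite mulrCA mulrA.
Qed.

Lemma derived_slice n v c :
  derived (expanded_constants mul C) n v -> derived C n (slice v c).
Proof.
elim: n v c => [//|n IHn] v c /=.
elim=> [|w [x [y [Dx [Dy ->]]]]|w1 w2 _ span1 _ span2|e w _ span_w].
- exact: span_zero.
- rewrite slice_expanded_bracket.
  apply: in_span_sum => a; apply: in_span_sum => b; apply: span_scale; apply: span_gen.
  by exists (slice x a), (slice y b); split; [exact: IHn | split; [exact: IHn |]].
- exact: span_add.
- exact: span_scale.
Qed.

End ExpandedAlgebra.

Theorem theorem1 (F : fieldType) (I : finType) (C : I -> I -> I -> F)
  (S : finType) (mul : S -> S -> S) :
  is_lie_constants C -> solvable_sc C -> abelian_semigroup mul ->
  solvable_sc (expanded_constants mul C).
Proof.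
move=> _ [n derived_n_0] _; exists n => v Dv [i c].
exact: (derived_n_0 _ (derived_slice c Dv) i).
Qed.
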